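(* Let $\rho_\mathcal{A}$ be an antisymmetric state on $\mathbb{C}^d\otimes\mathbb{C}^d$ and let $p^\textrm{PPT}(\rho_\mathcal{A})$ be the optimal value of the semidefinite program: maximize $\operatorname{Tr}(P_\mathcal{A}\sigma)$ over $\sigma$ subject to $P_\mathcal{A}\sigma P_\mathcal{A} = \operatorname{Tr}(P_\mathcal{A}\sigma)\rho_\mathcal{A}$, $\sigma\geq 0$, $\operatorname{Tr}(\sigma)=1$, $\sigma^\Gamma\geq 0$. If $p^\textrm{PPT}(\rho_\mathcal{A})<1/2$, then any optimal state $\sigma^*$ of this program (a PPT state with $P_\mathcal{A}\sigma^*P_\mathcal{A}=p^\textrm{PPT}(\rho_\mathcal{A})\rho_\mathcal{A}$) is entangled, hence PPT entangled.
   Context: $V$ is the swap operator on $\mathbb{C}^d\otimes\mathbb{C}^d$, $P_\mathcal{A}=(\mathbb{1}-V)/2$ is the projector onto the antisymmetric subspace (with $\mathbb{1}$ the identity operator). An antisymmetric state satisfies $\rho_\mathcal{A}=P_\mathcal{A}\rho_\mathcal{A}P_\mathcal{A}$. A state is separable if it is of the form $\sum_k q_k |\alpha_k\rangle\langle\alpha_k|\otimes|\beta_k\rangle\langle\beta_k|$; $\sigma^\Gamma$ is the partial transpose. *)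

(* Matrices on C^d (x) C^d are 'M[C]_(d * d), with the
   product basis index (i, j) encoded as mxtens_index (i, j) (from
   mathcomp real_closed's mxtens.v, which also provides the Kronecker
   product A *t B). C is an arbitrary numClosedFieldType (e.g. algC or
   complex R for a real closed field R), the numeric-closed analogue of C. *)
From HB Require Import structures.
From mathcomp Require Import all_boot all_order all_algebra.
From mathcomp Require Export mxtens.
Set Implicit Arguments. Unset Strict Implicit. Unset Printing Implicit Defensive.
Import Order.TTheory GRing.Theory Num.Theory.
Local Open Scope ring_scope.

Section Defs.
Variable C : numClosedFieldType.

Definition adjmx {m n} (A : 'M[C]_(m, n)) : 'M[C]_(n, m) :=
  map_mx Num.conj (A^T).

Definition psd {n} (A : 'M[C]_n) : Prop :=
  adjmx A = A /\ forall v : 'cV[C]_n, 0 <= (adjmx v *m A *m v) 0 0.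

Definition is_state {n} (A : 'M[C]_n) : Prop := psd A /\ \tr A = 1.

Definition swapop (d : nat) : 'M[C]_(d * d) :=
  \matrix_(a, b) ((((mxtens_unindex a).1 == (mxtens_unindex b).2) &&
                   ((mxtens_unindex a).2 == (mxtens_unindex b).1))%:R).

Definition PA (d : nat) : 'M[C]_(d * d) := 2^-1 *: (1%:M - swapop d).

Definition antisym_state (d : nat) (rho : 'M[C]_(d * d)) : Prop :=
  is_state rho /\ rho = PA d *m rho *m PA d.

(* partial transpose on the second factor:
   <i k| s^Gamma |j l> = <i l| s |j k> *)
Definition ptrans (d : nat) (s : 'M[C]_(d * d)) : 'M[C]_(d * d) :=
  \matrix_(a, b) s (mxtens_index ((mxtens_unindex a).1, (mxtens_unindex b).2))
                   (mxtens_index ((mxtens_unindex b).1, (mxtens_unindex a).2)).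

Definition unitvec {n} (v : 'cV[C]_n) : Prop := (adjmx v *m v) 0 0 = 1.
Definition ketbra {n} (v : 'cV[C]_n) : 'M[C]_n := v *m adjmx v.

Definition separable (d : nat) (s : 'M[C]_(d * d)) : Prop :=
  exists (N : nat) (q : 'I_N -> C) (al be : 'I_N -> 'cV[C]_d),
    [/\ forall k, 0 <= q k,
        \sum_k q k = 1,
        forall k, unitvec (al k) /\ unitvec (be k)
      & s = \sum_k q k *: (ketbra (al k) *t ketbra (be k))].

Definition entangled (d : nat) (s : 'M[C]_(d * d)) : Prop := ~ separable s.

Definition ppt_feasible (d : nat) (rho s : 'M[C]_(d * d)) : Prop :=
  [/\ PA d *m s *m PA d = \tr (PA d *m s) *: rho,
      psd s, \tr s = 1 & psd (ptrans s)].

Definition ppt_optimal (d : nat) (rho s : 'M[C]_(d * d)) : Prop :=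
  ppt_feasible rho s /\
  forall s', ppt_feasible rho s' -> \tr (PA d *m s') <= \tr (PA d *m s).

End Defs.
Arguments PA {C} d.
Arguments swapop {C} d.

From HB Require Import structures.
From mathcomp Require Import all_boot all_order all_algebra.
From mathcomp Require Import mxtens ring.
Set Implicit Arguments. Unset Strict Implicit. Unset Printing Implicit Defensive.
Import Order.TTheory GRing.Theory Num.Theory.
Local Open Scope ring_scope.

(* Suppose the optimal state sigma = sum_k q_k |a_k b_k><a_k b_k| were separable.
   Replacing b_k by its component b_k - <a_k, b_k> a_k orthogonal to a_k does not
   change P_A |a_k b_k>, since P_A |a_k a_k> = 0; and a product vector |a b> with
   a orthogonal to b has exactly half of its norm in the antisymmetric subspace.
   After renormalisation this gives a separable, hence PPT, feasible state with
   Tr(P_A s) = 1/2 > p^PPT, contradicting optimality.  Renormalising requires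
   p^PPT > 0, which follows from the explicit feasible point proportional to
   rho + c (1 + V) for c large enough. *)

Section Adjoint.
Variable C : numClosedFieldType.

Lemma adjmxK m n (A : 'M[C]_(m, n)) : adjmx (adjmx A) = A.
Proof. exact: trmxCK. Qed.

Lemma adjmxM m n p (A : 'M[C]_(m, n)) (B : 'M[C]_(n, p)) :
  adjmx (A *m B) = adjmx B *m adjmx A.
Proof. by rewrite /adjmx trmx_mul map_mxM. Qed.

Lemma adjmxD m n (A B : 'M[C]_(m, n)) : adjmx (A + B) = adjmx A + adjmx B.
Proof. by apply/matrixP=> i j; rewrite !mxE rmorphD. Qed.

Lemma adjmxN m n (A : 'M[C]_(m, n)) : adjmx (- A) = - adjmx A.
Proof. by apply/matrixP=> i j; rewrite !mxE rmorphN. Qed.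

Lemma adjmxZ m n a (A : 'M[C]_(m, n)) : adjmx (a *: A) = a^* *: adjmx A.
Proof. by apply/matrixP=> i j; rewrite !mxE rmorphM. Qed.

Lemma adjmx1 n : adjmx (1%:M : 'M[C]_n) = 1%:M.
Proof. by apply/matrixP=> i j; rewrite !mxE rmorph_nat eq_sym. Qed.

Lemma herm_entry n (M : 'M[C]_n) a b : adjmx M = M -> M b a = (M a b)^*.
Proof. by move=> hM; rewrite -{1}hM !mxE. Qed.

End Adjoint.

Section Forms.
Variables (C : numClosedFieldType) (n : nat).
Implicit Types (u v w : 'cV[C]_n) (M : 'M[C]_n).

Definition dotcv u v : C := (adjmx u *m v) 0 0.
Definition formcv M u v : C := (adjmx u *m M *m v) 0 0.

Lemma dotcvE u v : dotcv u v = \sum_a (u a 0)^* * v a 0.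
Proof. by rewrite /dotcv mxE; apply: eq_bigr => a _; rewrite !mxE. Qed.

Lemma dotcv_ge0 v : 0 <= dotcv v v.
Proof.
by rewrite dotcvE; apply: sumr_ge0 => a _; rewrite mulrC mul_conjC_ge0.
Qed.

Lemma dotcvBr u v w : dotcv u (v - w) = dotcv u v - dotcv u w.
Proof. by rewrite /dotcv mulmxBr !mxE. Qed.

Lemma dotcvZr u v c : dotcv u (c *: v) = c * dotcv u v.
Proof. by rewrite /dotcv -scalemxAr mxE. Qed.

Lemma formcvE M u v :
  formcv M u v = \sum_a \sum_b (u a 0)^* * M a b * v b 0.
Proof.
rewrite /formcv mxE exchange_big; apply: eq_bigr => b _.
by rewrite mxE mulr_suml; apply: eq_bigr => a _; rewrite !mxE.
Qed.

Lemma formcv1 u v : formcv 1%:M u v = dotcv u v.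
Proof. by rewrite /formcv mulmx1. Qed.

Lemma formcvD (A B : 'M[C]_n) u v : formcv (A + B) u v = formcv A u v + formcv B u v.
Proof. by rewrite /formcv mulmxDr mulmxDl mxE. Qed.

Lemma formcvZ M c u v : formcv (c *: M) u v = c * formcv M u v.
Proof. by rewrite /formcv -scalemxAr -scalemxAl mxE. Qed.

Lemma formcvN M u v : formcv (- M) u v = - formcv M u v.
Proof. by rewrite -scaleN1r formcvZ mulN1r. Qed.

Lemma formcv_dotcv M u v : formcv M u v = dotcv u (M *m v).
Proof. by rewrite /formcv /dotcv mulmxA. Qed.

Lemma formcvDl M u v w : formcv M (u + v) w = formcv M u w + formcv M v w.
Proof. by rewrite /formcv adjmxD !mulmxDl mxE. Qed.

Lemma formcvDr M u v w : formcv M u (v + w) = formcv M u v + formcv M u w.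
Proof. by rewrite /formcv mulmxDr mxE. Qed.

Lemma formcvZl M c u v : formcv M (c *: u) v = c^* * formcv M u v.
Proof. by rewrite /formcv adjmxZ -!scalemxAl mxE. Qed.

Lemma formcvZr M c u v : formcv M u (c *: v) = c * formcv M u v.
Proof. by rewrite /formcv -scalemxAr mxE. Qed.

Lemma formcv_delta M a b : formcv M (delta_mx a 0) (delta_mx b 0) = M a b.
Proof.
rewrite formcvE (bigD1 a) //= [X in _ + X]big1 ?addr0; last first.
  by move=> x /negbTE xa; apply: big1 => y _; rewrite !mxE xa /= rmorph0 !mul0r.
rewrite (bigD1 b) //= [X in _ + X]big1 ?addr0; last first.
  by move=> y /negbTE yb; rewrite !mxE yb /= mulr0.
by rewrite !mxE !eqxx /= rmorph1 mul1r mulr1.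
Qed.

Lemma herm_formcv_real M v : adjmx M = M -> formcv M v v \is Num.real.
Proof.
move=> hM; rewrite CrealE; apply/eqP.
rewrite !formcvE rmorph_sum [RHS]exchange_big; apply: eq_bigr => a _.
rewrite rmorph_sum; apply: eq_bigr => b _ /=.
by rewrite !rmorphM /= conjCK (herm_entry a b hM); ring.
Qed.

End Forms.

Section PositiveSemidefinite.
Variables (C : numClosedFieldType) (n : nat).
Implicit Types (v : 'cV[C]_n) (M : 'M[C]_n).

Lemma psd0 : psd (0 : 'M[C]_n).
Proof.
split=> [|v]; first by apply/matrixP=> i j; rewrite !mxE rmorph0.
by rewrite mulmx0 mul0mx mxE.
Qed.

Lemma psdD (A B : 'M[C]_n) : psd A -> psd B -> psd (A + B).
Proof.
move=> [hA pA] [hB pB]; split=> [|v]; first by rewrite adjmxD hA hB.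
by rewrite -/(formcv _ v v) formcvD addr_ge0 //; [exact: pA | exact: pB].
Qed.

Lemma psdZ c M : 0 <= c -> psd M -> psd (c *: M).
Proof.
move=> c0 [hM pM]; split=> [|v]; first by rewrite adjmxZ hM geC0_conj.
by rewrite -/(formcv _ v v) formcvZ mulr_ge0 //; exact: pM.
Qed.

Lemma psd_sumZ (I : finType) (q : I -> C) (A : I -> 'M[C]_n) :
  (forall k, 0 <= q k) -> (forall k, psd (A k)) -> psd (\sum_k q k *: A k).
Proof.
move=> q0 pA; elim/big_ind: _ => [|X Y|k _]; [exact: psd0 | exact: psdD | exact: psdZ].
Qed.

Lemma psd_diag_ge0 M a : psd M -> 0 <= M a a.
Proof. by move=> [_ pM]; rewrite -formcv_delta; exact: pM. Qed.

Lemma psd_tr_ge0 M : psd M -> 0 <= \tr M.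
Proof. by move=> pM; apply: sumr_ge0 => a _; exact: psd_diag_ge0. Qed.

Lemma psd_mul_adjmx m (A : 'M[C]_(n, m)) : psd (A *m adjmx A).
Proof.
split=> [|v]; first by rewrite adjmxM adjmxK.
rewrite mulmxA -mulmxA -{1}(adjmxK A) -adjmxM.
exact: dotcv_ge0.
Qed.

(* Evaluate the form at [e_x - (M x y)^* e_y] and use [M x x, M y y <= \tr M = 1]. *)
Lemma state_entry_le1 M x y : is_state M -> `|M x y| <= 1.
Proof.
move=> [[hM pM] tr1].
have diag_le1 a : M a a <= 1.
  by rewrite -tr1 /mxtrace (bigD1 a) //= lerDl sumr_ge0 // => b _; apply: psd_diag_ge0.
set z := M x y; set r := z * z^*.
have := pM (delta_mx x 0 + (- z^*) *: delta_mx y 0).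
rewrite -/(formcv _ _ _) formcvDl !formcvDr !formcvZl !formcvZr !formcv_delta.
rewrite (herm_entry x y hM) -/z rmorphN /= conjCK.
have -> : M x x + - z^* * z + (- z * z^* + - z * (- z^* * M y y)) =
          M x x - r - r + r * M y y by rewrite /r; ring.
have r0 : 0 <= r by exact: mul_conjC_ge0.
have ryy : r * M y y <= r by rewrite ler_piMr // psd_diag_ge0.
move=> form_ge0; have : 0 <= 1 - r - r + r.
  by apply: (le_trans form_ge0); apply: lerD ryy; rewrite !lerD2r.
by rewrite addrNK subr_ge0 /r -normCK expr_le1.
Qed.

(* Each term of the form is bounded by [|v a|^2 + |v b|^2],
   so [|formcv M v v| <= 2 n |v|^2]. *)
Lemma psd_herm_shift M : adjmx M = M -> (forall a b, `|M a b| <= 1) ->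
  psd (M + (n + n)%:R *: 1%:M).
Proof.
move=> hM hb; split=> [|v]; first by rewrite adjmxD adjmxZ hM adjmx1 conjC_nat.
rewrite -/(formcv _ v v) formcvD formcvZ formcv1 -[_ * dotcv v v]opprK subr_ge0.
suff : `|formcv M v v| <= (n + n)%:R * dotcv v v.
  by rewrite real_ler_norml ?herm_formcv_real // => /andP[].
have -> : dotcv v v = \sum_a `|v a 0| ^+ 2.
  by rewrite dotcvE; apply: eq_bigr => a _; rewrite normCKC.
rewrite formcvE; apply: le_trans (ler_norm_sum _ _ _) _.
apply: le_trans (_ : \sum_a \sum_b (`|v a 0| ^+ 2 + `|v b 0| ^+ 2) <= _).
  apply: ler_sum => a _; apply: le_trans (ler_norm_sum _ _ _) _.
  apply: ler_sum => b _; rewrite !normrM norm_conjC.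
  rewrite mulrAC; apply: le_trans (_ : `|v a 0| * `|v b 0| *+ 2 <= _).
    by rewrite mulr2n ler_wpDr ?mulr_ge0 // ler_piMr ?mulr_ge0.
  by apply: leif_le (real_leif_mean_square_scaled _ _); rewrite ger0_real.
rewrite (eq_bigr (fun a => `|v a 0| ^+ 2 *+ n + \sum_b `|v b 0| ^+ 2)); last first.
  by move=> a _; rewrite big_split /= sumr_const card_ord.
by rewrite big_split /= sumr_const card_ord sumrMnl mulr_natl mulrnDr.
Qed.

End PositiveSemidefinite.

Section Ketbra.
Variables (C : numClosedFieldType) (n : nat).
Implicit Types (u v z : 'cV[C]_n) (M : 'M[C]_n).

Lemma ketbraE z a b : ketbra z a b = z a 0 * (z b 0)^*.
Proof. by rewrite mxE big_ord1 !mxE. Qed.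

Lemma psd_ketbra z : psd (ketbra z).
Proof. exact: psd_mul_adjmx. Qed.

Lemma herm_mulmx_sumZ_ketbra (I : finType) M (q : I -> C) (z : I -> 'cV[C]_n) :
  adjmx M = M ->
  M *m (\sum_k q k *: ketbra (z k)) *m M = \sum_k q k *: ketbra (M *m z k).
Proof.
move=> hM; rewrite -{2}hM mulmx_sumr mulmx_suml; apply: eq_bigr => k _.
by rewrite -scalemxAr -scalemxAl /ketbra adjmxM !mulmxA.
Qed.

Lemma mxtrace_mul_ketbra M z : \tr (M *m ketbra z) = formcv M z z.
Proof. by rewrite mulmxA mxtrace_mulC mulmxA /mxtrace big_ord1. Qed.

Lemma mxtrace_mul_sumZ_ketbra (I : finType) M (q : I -> C) (z : I -> 'cV[C]_n) :
  \tr (M *m \sum_k q k *: ketbra (z k)) = \sum_k q k * formcv M (z k) (z k).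
Proof.
rewrite mulmx_sumr raddf_sum /=; apply: eq_bigr => k _.
by rewrite -scalemxAr mxtraceZ mxtrace_mul_ketbra.
Qed.

End Ketbra.

Section TensorVectors.
Variable C : numClosedFieldType.

Lemma big_mxtens m n (F : 'I_(m * n) -> C) :
  \sum_a F a = \sum_i \sum_j F (mxtens_index (i, j)).
Proof.
rewrite pair_big /= (reindex (@mxtens_index m n)) /=; last first.
  by exists (@mxtens_unindex m n) => x _; rewrite ?mxtens_indexK ?mxtens_unindexK.
by apply: eq_bigr => -[i j].
Qed.

Definition tensv m n (u : 'cV[C]_m) (w : 'cV[C]_n) : 'cV[C]_(m * n) :=
  \col_a (u (mxtens_unindex a).1 0 * w (mxtens_unindex a).2 0).

Lemma tensvE m n (u : 'cV[C]_m) (w : 'cV[C]_n) i j :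
  tensv u w (mxtens_index (i, j)) 0 = u i 0 * w j 0.
Proof. by rewrite mxE mxtens_indexK. Qed.

Lemma tensvDr m n (u : 'cV[C]_m) (w1 w2 : 'cV[C]_n) :
  tensv u (w1 + w2) = tensv u w1 + tensv u w2.
Proof. by apply/matrixP => i j; rewrite !mxE mulrDr. Qed.

Lemma tensvZr m n (u : 'cV[C]_m) (w : 'cV[C]_n) c :
  tensv u (c *: w) = c *: tensv u w.
Proof. by apply/matrixP => i j; rewrite !mxE mulrCA. Qed.

Lemma dotcv_tensv m n (u1 u2 : 'cV[C]_m) (w1 w2 : 'cV[C]_n) :
  dotcv (tensv u1 w1) (tensv u2 w2) = dotcv u1 u2 * dotcv w1 w2.
Proof.
rewrite !dotcvE big_mxtens mulr_suml; apply: eq_bigr => i _.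
rewrite mulr_sumr; apply: eq_bigr => j _.
by rewrite !tensvE rmorphM /=; ring.
Qed.

Lemma ketbra_tensv m n (u : 'cV[C]_m) (w : 'cV[C]_n) :
  ketbra u *t ketbra w = ketbra (tensv u w).
Proof.
apply/matrixP => x y; case: (mxtens_indexP x) => i j; case: (mxtens_indexP y) => k l.
by rewrite tensmxE !ketbraE !tensvE rmorphM; ring.
Qed.

End TensorVectors.

Section Swap.
Variables (C : numClosedFieldType) (d : nat).
Implicit Types (u w : 'cV[C]_d) (X : 'M[C]_(d * d)).

Lemma swapopE i j k l :
  swapop d (mxtens_index (i, j)) (mxtens_index (k, l)) = ((i == l) && (j == k))%:R :> C.
Proof. by rewrite mxE !mxtens_indexK. Qed.

Lemma big_swap_delta i j (F : 'I_d -> 'I_d -> C) :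
  \sum_x \sum_y ((i == y) && (j == x))%:R * F x y = F j i.
Proof.
rewrite (bigD1 j) //= [X in _ + X]big1 ?addr0; last first.
  by move=> x /negbTE xj; apply: big1 => y _; rewrite [j == x]eq_sym xj andbF mul0r.
rewrite (bigD1 i) //= [X in _ + X]big1 ?addr0 ?eqxx ?mul1r // => y /negbTE iy.
by rewrite eq_sym iy mul0r.
Qed.

Lemma swapop_tensv u w : swapop d *m tensv u w = tensv w u.
Proof.
apply/matrixP => a b; rewrite [b]ord1; case: (mxtens_indexP a) => i j.
rewrite mxE big_mxtens tensvE.
under eq_bigr => x _ do under eq_bigr => y _ do rewrite swapopE tensvE.
by rewrite big_swap_delta mulrC.
Qed.

Lemma swapopK : swapop d *m swapop d = 1%:M :> 'M[C]_(d * d).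
Proof.
apply/matrixP => a c; case: (mxtens_indexP a) => i j; case: (mxtens_indexP c) => k l.
rewrite mxE big_mxtens.
under eq_bigr => x _ do under eq_bigr => y _ do rewrite !swapopE.
rewrite big_swap_delta !mxE (inj_eq (can_inj (@mxtens_indexK _ _))) xpair_eqE.
by rewrite andbC.
Qed.

Lemma adj_swapop : adjmx (swapop d) = swapop d :> 'M[C]_(d * d).
Proof.
apply/matrixP => a c; case: (mxtens_indexP a) => i j; case: (mxtens_indexP c) => k l.
by rewrite !mxE !mxtens_indexK /= rmorph_nat [k == j]eq_sym [l == i]eq_sym andbC.
Qed.

Lemma adj_PA : adjmx (PA d) = PA d :> 'M[C]_(d * d).
Proof.
by rewrite adjmxZ adjmxD adjmxN adjmx1 adj_swapop geC0_conj // invr_ge0 ler0n.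
Qed.

Lemma PA_idem : PA d *m PA d = PA d :> 'M[C]_(d * d).
Proof.
rewrite -scalemxAl -scalemxAr scalerA mulmxBl mul1mx mulmxBr mulmx1 swapopK.
have -> : 1%:M - swapop d - (swapop d - 1%:M) =
          2%:R *: (1%:M - swapop d) :> 'M[C]_(d * d).
  by rewrite scaler_nat mulr2n opprB addrA.
by rewrite scalerA -mulrA mulVf ?mulr1 // pnatr_eq0.
Qed.

Lemma PA_tensv_diag u : PA d *m tensv u u = 0.
Proof. by rewrite -scalemxAl mulmxBl mul1mx swapop_tensv subrr scaler0. Qed.

Lemma PA_mul_sym : PA d *m (1%:M + swapop d) = 0 :> 'M[C]_(d * d).
Proof.
rewrite -scalemxAl mulmxBl !mul1mx mulmxDr mulmx1 swapopK.
by rewrite [swapop d + 1%:M]addrC subrr scaler0.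
Qed.

Lemma mxtrace_PA X : \tr (PA d *m X) = \tr (PA d *m X *m PA d).
Proof. by rewrite [RHS]mxtrace_mulC mulmxA PA_idem. Qed.

Lemma psd_sym : psd (1%:M + swapop d : 'M[C]_(d * d)).
Proof.
set S := 1%:M + swapop d.
have adjS : adjmx S = S by rewrite adjmxD adjmx1 adj_swapop.
have -> : S = 2^-1 *: (S *m adjmx S).
  rewrite adjS mulmxDl !mulmxDr !mul1mx !mulmx1 swapopK [swapop d + _]addrC.
  by rewrite -mulr2n -scaler_nat scalerA mulVf ?scale1r // pnatr_eq0.
by apply: psdZ; [rewrite invr_ge0 ler0n | exact: psd_mul_adjmx].
Qed.

Lemma PA_tensvBZ u w c : PA d *m tensv u (w - c *: u) = PA d *m tensv u w.
Proof.
by rewrite -scaleNr tensvDr tensvZr mulmxDr -scalemxAr PA_tensv_diag scaler0 addr0.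
Qed.

Lemma formcv_PA_tensv u w : dotcv u u = 1 -> dotcv u w = 0 ->
  formcv (PA d) (tensv u w) (tensv u w) = 2^-1 * dotcv w w.
Proof.
move=> uu uw; rewrite formcvZ formcvD formcvN formcv1 formcv_dotcv swapop_tensv.
by rewrite !dotcv_tensv uu uw mul0r mul1r subr0.
Qed.

End Swap.

Section PartialTranspose.
Variables (C : numClosedFieldType) (d : nat).
Implicit Types (u w : 'cV[C]_d) (X Y : 'M[C]_(d * d)).

Lemma ptransE X i j k l :
  ptrans X (mxtens_index (i, j)) (mxtens_index (k, l)) =
  X (mxtens_index (i, l)) (mxtens_index (k, j)).
Proof. by rewrite mxE !mxtens_indexK. Qed.

Lemma ptransD X Y : ptrans (X + Y) = ptrans X + ptrans Y.
Proof. by apply/matrixP => a b; rewrite !mxE. Qed.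

Lemma ptransZ c X : ptrans (c *: X) = c *: ptrans X.
Proof. by apply/matrixP => a b; rewrite !mxE. Qed.

Lemma ptrans_sumZ (I : finType) (q : I -> C) (A : I -> 'M[C]_(d * d)) :
  ptrans (\sum_k q k *: A k) = \sum_k q k *: ptrans (A k).
Proof.
apply/matrixP => a b; rewrite !mxE !summxE; apply: eq_bigr => k _.
by rewrite !mxE.
Qed.

Lemma ptrans1 : ptrans (1%:M : 'M[C]_(d * d)) = 1%:M.
Proof.
apply/matrixP => a b; case: (mxtens_indexP a) => i j; case: (mxtens_indexP b) => k l.
rewrite ptransE !mxE !(inj_eq (can_inj (@mxtens_indexK _ _))) !xpair_eqE.
by rewrite [l == j]eq_sym.
Qed.

Lemma adj_ptrans X : adjmx (ptrans X) = ptrans (adjmx X).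
Proof.
apply/matrixP => x y; case: (mxtens_indexP x) => i j; case: (mxtens_indexP y) => k l.
by rewrite mxE ptransE /= !mxE !mxtens_indexK.
Qed.

Definition maxentv : 'cV[C]_(d * d) :=
  \col_a (((mxtens_unindex a).1 == (mxtens_unindex a).2)%:R).

Lemma ptrans_swapop : ptrans (swapop d) = ketbra maxentv.
Proof.
apply/matrixP => a b; case: (mxtens_indexP a) => i j; case: (mxtens_indexP b) => k l.
rewrite ptransE swapopE ketbraE !mxE !mxtens_indexK /= rmorph_nat.
by rewrite -natrM mulnb [l == k]eq_sym.
Qed.

Lemma ptrans_ketbra_tensv u w :
  ptrans (ketbra (tensv u w)) = ketbra (tensv u (map_mx Num.conj w)).
Proof.
apply/matrixP => x y; case: (mxtens_indexP x) => i j; case: (mxtens_indexP y) => k l.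
by rewrite ptransE !ketbraE !tensvE !mxE !rmorphM /= conjCK; ring.
Qed.

End PartialTranspose.

Section PPTProgram.
Variables (C : numClosedFieldType) (d : nat) (rho : 'M[C]_(d * d)).

Lemma ppt_feasible_normalize X :
  psd X -> psd (ptrans X) -> PA d *m X *m PA d = \tr (PA d *m X) *: rho ->
  0 < \tr X ->
  exists2 s, ppt_feasible rho s & \tr (PA d *m s) = \tr (PA d *m X) / \tr X.
Proof.
move=> pX pXG eX tX; set t := \tr X.
have t0 : 0 <= t^-1 by rewrite invr_ge0 ltW.
exists (t^-1 *: X); last by rewrite -scalemxAr mxtraceZ mulrC.
split.
- by rewrite -(scalemxAr _ (PA d) X) -(scalemxAl _ (PA d *m X)) eX mxtraceZ scalerA.
- exact: psdZ.
- by rewrite mxtraceZ mulVf ?gt_eqF.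
- by rewrite ptransZ; apply: psdZ.
Qed.

(* [rho + c (1 + V)] works once [c] dominates the entries of [rho^Gamma],
   because [P_A (1 + V) = 0] and [(1 + V)^Gamma = 1 + |maxentv><maxentv| >= 1]. *)
Lemma ppt_feasible_value_gt0 :
  antisym_state rho -> exists2 s, ppt_feasible rho s & 0 < \tr (PA d *m s).
Proof.
move=> [[[adj_rho psd_rho] tr_rho] rhoE].
pose c : C := (d * d + d * d)%:R.
pose X := rho + c *: (1%:M + swapop d).
have PA_X : PA d *m X = PA d *m rho.
  by rewrite mulmxDr -scalemxAr PA_mul_sym scaler0 addr0.
have trPA_X : \tr (PA d *m X) = 1 by rewrite PA_X mxtrace_PA -rhoE.
have psd_cS : psd (c *: (1%:M + swapop d)).
  by apply: psdZ; [exact: ler0n | exact: psd_sym].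
have psdX : psd X by apply: psdD => //; split.
have trX : 0 < \tr X by rewrite mxtraceD tr_rho ltr_pwDl ?ltr01 ?psd_tr_ge0.
have psdXG : psd (ptrans X).
  rewrite ptransD ptransZ ptransD ptrans1 ptrans_swapop scalerDr addrA.
  apply: psdD; last by apply: psdZ; [exact: ler0n | exact: psd_ketbra].
  apply: psd_herm_shift; first by rewrite adj_ptrans adj_rho.
  by move=> a b; rewrite mxE; apply: state_entry_le1.
have [|s fs vs] := ppt_feasible_normalize psdX psdXG _ trX.
  by rewrite trPA_X PA_X scale1r -rhoE.
by exists s => //; rewrite vs trPA_X mul1r invr_gt0.
Qed.

Lemma separable_ppt_feasible_half sigma :
  ppt_feasible rho sigma -> separable sigma -> 0 < \tr (PA d *m sigma) ->
  exists2 s, ppt_feasible rho s & \tr (PA d *m s) = 2^-1.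
Proof.
move=> [sigmaE _ _ _] [N [q [a [b [q0 _ unit_ab sigma_sum]]]]] p0.
have {}sigma_sum : sigma = \sum_k q k *: ketbra (tensv (a k) (b k)).
  by rewrite sigma_sum; apply: eq_bigr => k _; rewrite ketbra_tensv.
pose b' k := b k - dotcv (a k) (b k) *: a k.
pose Y := \sum_k q k *: ketbra (tensv (a k) (b' k)).
have PA_Y : PA d *m Y *m PA d = PA d *m sigma *m PA d.
  rewrite sigma_sum !herm_mulmx_sumZ_ketbra ?adj_PA //.
  by apply: eq_bigr => k _; rewrite PA_tensvBZ.
have trPA_Y : \tr (PA d *m Y) = \tr (PA d *m sigma) by rewrite !mxtrace_PA PA_Y.
have trY : \tr Y = 2 * \tr (PA d *m Y).
  rewrite -{1}[Y]mul1mx !mxtrace_mul_sumZ_ketbra mulr_sumr; apply: eq_bigr => k _.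
  have ua : dotcv (a k) (a k) = 1 := (unit_ab k).1.
  have orth : dotcv (a k) (b' k) = 0 by rewrite dotcvBr dotcvZr ua mulr1 subrr.
  rewrite formcv1 formcv_PA_tensv // dotcv_tensv ua mul1r mulrCA [2 * _]mulrA.
  by rewrite mulfV ?mul1r // pnatr_eq0.
have psdY : psd Y by apply: psd_sumZ => // k; apply: psd_ketbra.
have psdYG : psd (ptrans Y).
  rewrite ptrans_sumZ; apply: psd_sumZ => // k.
  by rewrite ptrans_ketbra_tensv; apply: psd_ketbra.
have trY_gt0 : 0 < \tr Y by rewrite trY mulr_gt0 ?ltr0n // trPA_Y.
have [|s fs vs] := ppt_feasible_normalize psdY psdYG _ trY_gt0.
  by rewrite PA_Y sigmaE trPA_Y.
by exists s => //; rewrite vs trY invfM mulrCA mulfV ?mulr1 // trPA_Y gt_eqF.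
Qed.

End PPTProgram.

Theorem mainTheorem3 (C : numClosedFieldType) (d : nat)
    (rho sigma : 'M[C]_(d * d)) :
  antisym_state rho ->
  ppt_optimal rho sigma ->
  \tr (PA d *m sigma) < 2^-1 ->
  entangled sigma /\ psd (ptrans sigma).
Proof.
move=> antisym_rho [feasible_sigma optimal_sigma] p_lt_half.
split=> [separable_sigma|]; last by case: feasible_sigma.
have [s0 feasible_s0 s0_gt0] := ppt_feasible_value_gt0 antisym_rho.
have p_gt0 := lt_le_trans s0_gt0 (optimal_sigma s0 feasible_s0).
have [s feasible_s s_half] :=
  separable_ppt_feasible_half feasible_sigma separable_sigma p_gt0.
have := optimal_sigma s feasible_s; rewrite s_half => half_le_p.
by have := lt_le_trans p_lt_half half_le_p; rewrite ltxx.
Qed.
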